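(* Let $(p_\beta(x,y))$ be a discrete-time Markov chain on a finite state space $\mathcal{S}$, reversible with respect to $\mu$, let $A\subseteq\mathcal{S}$, and let $P_A$ be the matrix with entries $p^A_\beta(x,y)=p_\beta(x,y)$ for $x,y\in\mathcal{S}\setminus A$ and $0$ otherwise, assumed irreducible and aperiodic, with largest eigenvalue $1-\lambda_{0,A}$. Let $\psi_0\ge0$ be the (unique up to scaling) eigenvector of $P_A$ with eigenvalue $1-\lambda_{0,A}$. Then there exists $b\ge0$ such that, with $B=\{x\in\mathcal{S}:\psi_0(x)>b\}$, $$\frac{1}{|\mathcal{S}|}\,\frac{\sum_{(x,y)\in\partial B}\mu(x)p_\beta(x,y)}{\sum_{x\in B}\mu(x)}\le\lambda_{0,A}\le\frac{\sum_{(x,y)\in\partial B}\mu(x)p_\beta(x,y)}{\sum_{x\in B}\mu(x)} .$$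
   Context: $\partial B$ is the set of pairs $(x,y)$ with $p_\beta(x,y)>0$, $x\in B$, $y\notin B$. *)

From mathcomp Require Import all_boot all_order all_algebra.
Set Implicit Arguments. Unset Strict Implicit. Unset Printing Implicit Defensive.
Import Order.TTheory GRing.Theory Num.Theory.
Local Open Scope ring_scope.

Section MarkovDefs.
Variables (R : realFieldType) (T : finType).

Definition stochastic (p : T -> T -> R) :=
  (forall x y, 0 <= p x y) /\ (forall x, \sum_y p x y = 1).

Definition reversible (mu : T -> R) (p : T -> T -> R) :=
  forall x y, mu x * p x y = mu y * p y x.

Definition killed (p : T -> T -> R) (A : {set T}) : T -> T -> R :=
  fun x y => if (x \notin A) && (y \notin A) then p x y else 0.

Fixpoint mpow (Q : T -> T -> R) (n : nat) : T -> T -> R :=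
  match n with
  | 0 => fun x y => (x == y)%:R
  | n'.+1 => fun x y => \sum_z Q x z * mpow Q n' z y
  end.

Definition irreducible_on (Q : T -> T -> R) (D : {set T}) :=
  forall x y, x \in D -> y \in D -> exists n, (0 < n)%N /\ 0 < mpow Q n x y.

Definition period_one (Q : T -> T -> R) (x : T) :=
  forall d : nat,
    (forall n, (0 < n)%N -> 0 < mpow Q n x x -> (d %| n)%N) -> d = 1%N.

Definition aperiodic_on (Q : T -> T -> R) (D : {set T}) :=
  forall x, x \in D -> period_one Q x.

Definition eigenvector (Q : T -> T -> R) (e : R) (v : T -> R) :=
  (exists x, v x != 0) /\ (forall x, \sum_y Q x y * v y = e * v x).

Definition eigenvalue (Q : T -> T -> R) (e : R) := exists v, eigenvector Q e v.

Definition largest_eigenvalue (Q : T -> T -> R) (e : R) :=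
  eigenvalue Q e /\ (forall e', eigenvalue Q e' -> e' <= e).

Definition boundary (p : T -> T -> R) (B : {set T}) : {set T * T} :=
  [set xy | [&& 0 < p xy.1 xy.2, xy.1 \in B & xy.2 \notin B]].

Definition flow_ratio (mu : T -> R) (p : T -> T -> R) (B : {set T}) : R :=
  (\sum_(xy in boundary p B) mu xy.1 * p xy.1 xy.2) / (\sum_(x in B) mu x).

End MarkovDefs.

From mathcomp Require Import all_boot all_order all_algebra.
From mathcomp Require Import reals.
From mathcomp Require Import ring lra.
From mathcomp Require all_classical all_reals all_analysis.
Set Implicit Arguments.
Unset Strict Implicit.
Unset Printing Implicit Defensive.
Import Order.TTheory GRing.Theory Num.Theory.
Local Open Scope ring_scope.

(* Since 1 - lam > 0 (the top eigenvalue of the mu-self-adjoint matrix P_A is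
   a maximum of its Rayleigh quotient, which is positive), psi0 vanishes on A,
   so psi0 is an eigenfunction of p on every level set B = {psi0 > b}, b >= 0.
   Reversibility then gives
     lam * sum_B mu psi0 = sum_{x in B, y notin B} mu x p x y (psi0 x - psi0 y).
   Upper bound: by AM-GM on psi0 y / psi0 x + psi0 x / psi0 y, the mass flowing
   inside B is at most sum_{x, y in B} mu x p x y psi0 y / psi0 x, which is at
   most (1 - lam) mu(B).  Lower bound: by pigeonhole one of the |S| windows
   (k M/|S|, (k+1) M/|S|), M = max psi0, contains no value of psi0; taking b
   at its left end, psi0 x - psi0 y >= M/|S| across the boundary of B, while
   sum_B mu psi0 <= M mu(B). *)

Section RayleighQuotient.
Variables (R : realType) (T : finType) (mu : T -> R) (Q : T -> T -> R).
Hypothesis mu_gt0 : forall x, 0 < mu x.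

Definition mdot (u w : T -> R) := \sum_x mu x * u x * w x.
Definition mform (u w : T -> R) := \sum_x \sum_y mu x * u x * Q x y * w y.

Lemma mdot_ge0 w : 0 <= mdot w w.
Proof. by apply: sumr_ge0 => x _; rewrite -mulrA pmulr_rge0 // -expr2 sqr_ge0. Qed.

Lemma mdot_eq0 w : mdot w w = 0 -> forall x, w x = 0.
Proof.
move=> /eqP; rewrite psumr_eq0 => [/allP w0 x|x _]; last first.
  by rewrite -mulrA pmulr_rge0 // -expr2 sqr_ge0.
have /w0 := mem_index_enum x.
by rewrite -mulrA mulf_eq0 gt_eqF //= mulf_eq0 orbb => /eqP.
Qed.

Lemma mform_eq0 w : mdot w w = 0 -> mform w w = 0.
Proof.
move/mdot_eq0=> w0; rewrite /mform big1 // => x _.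
by rewrite big1 // => y _; rewrite w0 mulr0 !mul0r.
Qed.

Lemma mdotZ t w : mdot (fun x => t * w x) (fun x => t * w x) = t ^+ 2 * mdot w w.
Proof. by rewrite /mdot mulr_sumr; apply: eq_bigr => x _; ring. Qed.

Lemma mformZ t w : mform (fun x => t * w x) (fun x => t * w x) = t ^+ 2 * mform w w.
Proof.
rewrite /mform mulr_sumr; apply: eq_bigr => x _.
by rewrite mulr_sumr; apply: eq_bigr => y _; ring.
Qed.

Lemma mdot_shift u w t :
  mdot (fun x => u x + t * w x) (fun x => u x + t * w x) =
    mdot u u + t * (mdot u w + mdot w u) + t ^+ 2 * mdot w w.
Proof.
rewrite /mdot mulrDr !mulr_sumr -!big_split /=.
by apply: eq_bigr => x _; ring.
Qed.

Lemma mform_shift u w t :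
  mform (fun x => u x + t * w x) (fun x => u x + t * w x) =
    mform u u + t * (mform u w + mform w u) + t ^+ 2 * mform w w.
Proof.
rewrite /mform mulrDr !mulr_sumr -!big_split /=; apply: eq_bigr => x _.
by rewrite !mulr_sumr -!big_split /=; apply: eq_bigr => y _; ring.
Qed.

Section Compactness.
Import all_classical all_reals all_analysis numFieldNormedType.Exports.
Local Open Scope classical_set_scope.
Let n := #|T|.
Let of_row (v : 'rV[R]_n) : T -> R := fun x => v ord0 (enum_rank x).
Let to_row (w : T -> R) : 'rV[R]_n := \row_i w (enum_val i).

Let of_rowK w : of_row (to_row w) = w.
Proof. by apply: funext => x; rewrite /of_row /to_row mxE enum_rankK. Qed.

Let continuous_sum (I : finType) (f : I -> 'rV[R]_n -> R) :
  (forall i, continuous (f i)) -> continuous (fun v => \sum_i f i v).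
Proof.
move=> fc; apply: (@continuous_big _ _ +%R 0 xpredT _ _ (index_enum I) f).
  exact: add_continuous.
by move=> i _; apply: fc.
Qed.

Let continuous_of_row x : continuous (fun v : 'rV[R]_n => of_row v x).
Proof. exact: coord_continuous. Qed.

Let continuous_mform : continuous (fun v => mform (of_row v) (of_row v)).
Proof.
apply: continuous_sum => x; apply: continuous_sum => y v.
apply: (@continuousM _ _ (fun v => mu x * of_row v x * Q x y)); last exact: continuous_of_row.
apply: (@continuousM _ _ (fun v => mu x * of_row v x) (fun=> Q x y)); last exact: cst_continuous.
apply: (@continuousM _ _ (fun=> mu x)); [exact: cst_continuous | exact: continuous_of_row].
Qed.

Let continuous_mdot : continuous (fun v => mdot (of_row v) (of_row v)).
Proof.
apply: continuous_sum => x v.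
apply: (@continuousM _ _ (fun v => mu x * of_row v x)); last exact: continuous_of_row.
apply: (@continuousM _ _ (fun=> mu x)); [exact: cst_continuous | exact: continuous_of_row].
Qed.

Lemma mform_max_on_sphere (w1 : T -> R) : mdot w1 w1 = 1 ->
  exists c, mdot c c = 1 /\ forall w, mdot w w = 1 -> mform w w <= mform c c.
Proof.
move=> w1_unit.
pose sphere := [set v : 'rV[R]_n | mdot (of_row v) (of_row v) = 1].
pose K := 1 + \sum_x (mu x)^-1.
pose box := [set v : 'rV[R]_n | forall i, `[- K, K] (v ord0 i)].
have sphere_closed : closed sphere.
  apply: (@preimage_closed _ _ (fun v => mdot (of_row v) (of_row v)) [set 1]).
    by move=> v _; apply: continuous_mdot.
  exact: closed_eq.
have box_compact : compact box.
  by apply: (@rV_compact _ _ (fun=> `[- K, K])) => _; apply: segment_compact.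
have sphere_box : sphere `<=` box.
  move=> v /= v_unit i; rewrite /= in_itv /= -ler_norml.
  have -> : v ord0 i = of_row v (enum_val i) by rewrite /of_row enum_valK.
  set x := enum_val i; set a := of_row v x.
  have : mu x * a ^+ 2 <= 1.
    rewrite -v_unit /mdot (bigD1 x) //= mulrA lerDl.
    by apply: sumr_ge0 => y _; rewrite -mulrA pmulr_rge0 // -expr2 sqr_ge0.
  rewrite -ler_pdivlMl // mulr1 => a2_le.
  have : (mu x)^-1 <= \sum_y (mu y)^-1.
    by rewrite (bigD1 x) //= lerDl sumr_ge0 // => y _; rewrite invr_ge0 ltW.
  have : `|a| <= 1 + a ^+ 2 by case: (ler0P a) => _; nra.
  rewrite /K; lra.
have sphere_n0 : sphere !=set0 by exists (to_row w1); rewrite /sphere /= of_rowK.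
have [c c_unit c_max] := EVT_max_rV sphere_n0
  (subclosed_compact sphere_closed box_compact sphere_box)
  (continuous_subspaceT continuous_mform).
exists (of_row c); split=> [|w w_unit]; first by move: c_unit; rewrite inE.
by have := c_max (to_row w); rewrite of_rowK; apply; rewrite inE /sphere /= of_rowK.
Qed.

End Compactness.

Lemma mform_le_sphere_max c : mdot c c = 1 ->
    (forall w, mdot w w = 1 -> mform w w <= mform c c) ->
  forall w, mform w w <= mform c c * mdot w w.
Proof.
move=> c_unit c_max w; have [w0|wn0] := eqVneq (mdot w w) 0.
  by rewrite w0 mulr0 mform_eq0.
have w_gt0 : 0 < mdot w w by rewrite lt_def wn0 mdot_ge0.
set s := (Num.sqrt (mdot w w))^-1.
have s2 : s ^+ 2 = (mdot w w)^-1 by rewrite exprVn sqr_sqrtr // ltW.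
have := c_max (fun x => s * w x); rewrite mdotZ mformZ s2 mulVf // => /(_ erefl).
by rewrite mulrC ler_pdivrMr.
Qed.

Lemma quadratic_ge0_lin_eq0 (a b : R) :
  0 <= a -> (forall t, 0 <= 2 * t * b + t ^+ 2 * a) -> b = 0.
Proof.
move=> a_ge0 quad_ge0; set s := (a + 1)^-1.
have s_gt0 : 0 < s by rewrite invr_gt0; lra.
have sa : s * a = 1 - s.
  by rewrite -[1](@mulVf _ (a + 1)) ?mulrDr ?mulr1 ?addrK //; lra.
have := quad_ge0 (- b * s).
have -> : 2 * (- b * s) * b + (- b * s) ^+ 2 * a = - (b ^+ 2 * (s * (1 + s))).
  have -> : (- b * s) ^+ 2 * a = b ^+ 2 * s * (s * a) by ring.
  by rewrite sa; ring.
rewrite oppr_ge0 pmulr_lle0 ?mulr_gt0 //; last lra.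
by move=> b2_le0; apply/eqP; rewrite -sqrf_eq0 eq_le b2_le0 sqr_ge0.
Qed.

Hypothesis Q_rev : reversible mu Q.

Lemma mformC u w : mform w u = mform u w.
Proof.
rewrite /mform exchange_big /=; apply: eq_bigr => x _; apply: eq_bigr => y _.
by rewrite [mu y * _ * _]mulrAC Q_rev; ring.
Qed.

Lemma mdotC u w : mdot w u = mdot u w.
Proof. by apply: eq_bigr => x _; ring. Qed.

(* The Rayleigh quotient [mform w w / mdot w w] is stationary at its maximum,
   which is the Euler-Lagrange equation [Q c = m c]. *)
Lemma mform_max_eigenvector c : mdot c c = 1 ->
  (forall w, mform w w <= mform c c * mdot w w) -> eigenvector Q (mform c c) c.
Proof.
move=> c_unit c_max; set m := mform c c; split.
  case: (pickP (fun x => c x != 0)) => [x cx|c0]; first by exists x.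
  have : mdot c c = 0.
    by apply: big1 => x _; move/negbFE/eqP: (c0 x) => ->; rewrite mulr0.
  by rewrite c_unit => /eqP; rewrite oner_eq0.
move=> z; pose d x : R := (x == z)%:R.
have d_dot : mdot c d = mu z * c z.
  rewrite /mdot (bigD1 z) //= big1 => [|x /negbTE xz]; last by rewrite /d xz mulr0.
  by rewrite /d eqxx mulr1 addr0.
have d_form : mform c d = mu z * \sum_y Q z y * c y.
  rewrite /mform mulr_sumr; apply: eq_bigr => x _.
  rewrite (bigD1 z) //= big1 => [|y /negbTE yz]; last by rewrite /d yz mulr0.
  by rewrite /d eqxx mulr1 addr0 mulrAC Q_rev; ring.
have : m * mdot c d - mform c d = 0.
  apply: (@quadratic_ge0_lin_eq0 (m * mdot d d - mform d d)).
    by rewrite subr_ge0 c_max.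
  move=> t; have := c_max (fun x => c x + t * d x).
  rewrite mform_shift mdot_shift c_unit -/m mformC [mdot d c]mdotC -subr_ge0.
  by congr (0 <= _); ring.
rewrite d_dot d_form mulrCA -mulrBr => /eqP.
by rewrite mulf_eq0 gt_eqF //= subr_eq0 => /eqP ->.
Qed.

Lemma mform_gt0_eigenvalue_gt0 v :
  0 < mform v v -> exists2 e, 0 < e & exists w, eigenvector Q e w.
Proof.
move=> v_gt0; have [v0|vn0] := eqVneq (mdot v v) 0.
  by move: v_gt0; rewrite mform_eq0 ?ltxx.
have v_pos : 0 < mdot v v by rewrite lt_def vn0 mdot_ge0.
set s := (Num.sqrt (mdot v v))^-1.
have s2 : s ^+ 2 = (mdot v v)^-1 by rewrite exprVn sqr_sqrtr // ltW.
have v1_unit : mdot (fun x => s * v x) (fun x => s * v x) = 1 by rewrite mdotZ s2 mulVf.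
have [c [c_unit c_max]] := mform_max_on_sphere v1_unit.
exists (mform c c).
  by apply: lt_le_trans (c_max _ v1_unit); rewrite mformZ s2 mulr_gt0 // invr_gt0.
by exists c; apply: mform_max_eigenvector => //; apply: mform_le_sphere_max.
Qed.

Lemma mform1_gt0 x z : (forall u v, 0 <= Q u v) -> 0 < Q x z ->
  0 < mform (fun=> 1) (fun=> 1).
Proof.
move=> Q_ge0 Qxz_gt0; have term_ge0 u v : 0 <= mu u * 1 * Q u v * 1.
  by rewrite !mulr1 mulr_ge0 ?(ltW (mu_gt0 u)).
rewrite /mform (bigD1 x) //= (bigD1 z) //= -addrA.
apply: ltr_pwDl; first by rewrite !mulr1 mulr_gt0.
apply: addr_ge0; apply: sumr_ge0 => u _; last apply: sumr_ge0 => v _; exact: term_ge0.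
Qed.

End RayleighQuotient.

Lemma largest_eigenvalue_gt0 (R : realType) (T : finType) (mu : T -> R)
    (Q : T -> T -> R) (e : R) (x z : T) :
  (forall u, 0 < mu u) -> reversible mu Q -> (forall u v, 0 <= Q u v) ->
  0 < Q x z -> largest_eigenvalue Q e -> 0 < e.
Proof.
move=> mu_gt0 Q_rev Q_ge0 Qxz_gt0 [_ e_max].
have [e' e'_gt0 e'_eig] :=
  mform_gt0_eigenvalue_gt0 mu_gt0 Q_rev (mform1_gt0 mu_gt0 Q_ge0 Qxz_gt0).
exact: lt_le_trans e'_gt0 (e_max _ e'_eig).
Qed.

Lemma mpow_gt0_row_gt0 (R : realFieldType) (T : finType) (Q : T -> T -> R) n x y :
  (forall u v, 0 <= Q u v) -> 0 < mpow Q n.+1 x y -> exists z, 0 < Q x z.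
Proof.
move=> Q_ge0; case: (pickP (fun z => 0 < Q x z)) => [z Qxz _|Qx0]; first by exists z.
rewrite /= big1 ?ltxx // => z _.
have /eqP -> : Q x z == 0 by rewrite eq_le leNgt Qx0 Q_ge0.
by rewrite mul0r.
Qed.

Section KilledChain.
Variables (R : realFieldType) (T : finType) (p : T -> T -> R) (A : {set T}).

Lemma killed_ge0 : (forall x y, 0 <= p x y) -> forall x y, 0 <= killed p A x y.
Proof. by move=> p_ge0 x y; rewrite /killed; case: ifP. Qed.

Lemma killed_reversible mu : reversible mu p -> reversible mu (killed p A).
Proof.
move=> p_rev x y; rewrite /killed [(y \notin A) && _]andbC.
by case: ifP => _; [exact: p_rev | rewrite !mulr0].
Qed.

Variables (e : R) (psi : T -> R).
Hypotheses (e_neq0 : e != 0)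
  (psi_eig : forall x, \sum_y killed p A x y * psi y = e * psi x).

Lemma killed_eigenvector_eq0 x : x \in A -> psi x = 0.
Proof.
move=> xA; have /esym/eqP := psi_eig x.
rewrite big1 => [|y _]; last by rewrite /killed xA mul0r.
by rewrite mulf_eq0 (negbTE e_neq0) => /eqP.
Qed.

Lemma killed_eigenvectorE x : x \notin A -> \sum_y p x y * psi y = e * psi x.
Proof.
move=> xA; rewrite -psi_eig; apply: eq_bigr => y _; rewrite /killed xA /=.
by case: ifPn => // /negbNE /killed_eigenvector_eq0 ->; rewrite !mulr0.
Qed.

End KilledChain.

(* Among the [#|T|] disjoint windows [(k d, (k+1) d)] with [d = f xm / #|T|],
   at least one misses all values of [f], since [f xm] lies in none of them. *)
Lemma exists_level_gap (R : realFieldType) (T : finType) (f : T -> R) (xm : T) :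
  (forall y, f y <= f xm) -> 0 < f xm ->
  exists b, [/\ 0 <= b, b < f xm &
    forall y, (f y <= b) || (b + f xm / #|T|%:R <= f y)].
Proof.
move=> f_max M_gt0; set M := f xm; set n := #|T|; set d := M / n%:R.
have n_gt0 : (0 < n)%N by apply/card_gt0P; exists xm.
have d_gt0 : 0 < d by rewrite divr_gt0 ?ltr0n.
have Md : M = n%:R * d by rewrite /d mulrC divfK ?pnatr_eq0 -?lt0n.
pose window (k : 'I_n) v := (k%:R * d < v) && (v < k.+1%:R * d).
have window_le (i j : 'I_n) v : window i v -> window j v -> (i <= j)%N.
  move=> /andP[iv _] /andP[_ vj].
  by rewrite -ltnS -(ltr_nat R) -(ltr_pM2r d_gt0) (lt_trans iv vj).
have /existsP[k /forallP k_empty] : [exists k, [forall y, ~~ window k (f y)]].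
  apply: contraT; rewrite negb_exists => /forallP hit.
  have /fin_all_exists [g gP] : forall k, exists y, window k (f y).
    move=> k; move: (hit k); rewrite negb_forall => /existsP[y].
    by rewrite negbK; exists y.
  have g_inj : injective g.
    move=> i j gij; have wi := gP i; have wj := gP j; rewrite -gij in wj.
    apply/val_inj/anti_leq.
    by rewrite (window_le i j (f (g i))) ?(window_le j i (f (g i))).
  have : g @: [set: 'I_n] \subset [set~ xm].
    apply/subsetP => _ /imsetP[k _ ->]; rewrite !inE; apply/eqP => gk.
    have /andP[_] := gP k; rewrite gk -/M Md ltr_pM2r // ltr_nat ltnNge.
    by rewrite ltn_ord.
  move/subset_leq_card; rewrite card_imset // cardsT card_ord cardsC1 -/n.
  by rewrite -ltnS prednK // ltnn.
exists (k%:R * d); split.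
- by rewrite mulr_ge0 ?ler0n ?ltW.
- by rewrite Md ltr_pM2r // ltr_nat.
- have kS : k.+1%:R * d = k%:R * d + d by rewrite -addn1 natrD mulrDl mul1r.
  by move=> y; move: (k_empty y); rewrite /window kS negb_and -!leNgt.
Qed.

Lemma two_le_ratio_add (R : realFieldType) (s t : R) :
  0 < s -> 0 < t -> 2 <= s / t + t / s.
Proof.
move=> s_gt0 t_gt0; rewrite -subr_ge0.
have -> : s / t + t / s - 2 = (s - t) ^+ 2 / (s * t).
  by field; rewrite !lt0r_neq0.
by rewrite divr_ge0 ?sqr_ge0 // ltW ?mulr_gt0.
Qed.

Lemma sumr_gt0_set (R : numDomainType) (T : finType) (B : {set T}) (f : T -> R) :
  B != set0 -> (forall x, x \in B -> 0 < f x) -> 0 < \sum_(x in B) f x.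
Proof.
move=> /set0Pn[x xB] f_gt0; rewrite (bigD1 x) //= ltr_pwDl ?f_gt0 //.
by rewrite sumr_ge0 // => y /andP[yB _]; rewrite ltW ?f_gt0.
Qed.

Section FlowRatio.
Variables (R : realFieldType) (T : finType) (p : T -> T -> R) (mu : T -> R).
Hypotheses (p_stoch : stochastic p) (mu_gt0 : forall x, 0 < mu x)
  (p_rev : reversible mu p).
Let p_ge0 := p_stoch.1.
Let p_sum1 := p_stoch.2.

Variable B : {set T}.

Lemma boundary_flowE : \sum_(xy in boundary p B) mu xy.1 * p xy.1 xy.2 =
  \sum_(x in B) \sum_(y | y \notin B) mu x * p x y.
Proof.
rewrite pair_big_dep big_mkcond [RHS]big_mkcond; apply: eq_bigr => -[x y] _ /=.
rewrite inE /=; case: ((x \in B) && (y \notin B)); rewrite ?andbT ?andbF //.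
by have := p_ge0 x y; rewrite le_eqVlt => /orP[/eqP <-|->]; rewrite ?ltxx ?mulr0.
Qed.

Variables (lam : R) (psi : T -> R).
Hypotheses (psi_B_gt0 : forall x, x \in B -> 0 < psi x)
  (psi_eig : forall x, x \in B -> \sum_y p x y * psi y = (1 - lam) * psi x).

(* By reversibility the flow of [psi]-differences inside [B] cancels. *)
Lemma flow_identity : lam * \sum_(x in B) mu x * psi x =
  \sum_(x in B) \sum_(y | y \notin B) mu x * p x y * (psi x - psi y).
Proof.
pose g x y := mu x * p x y * (psi x - psi y).
have row x : x \in B -> lam * (mu x * psi x) = \sum_y g x y.
  move=> xB.
  have -> : \sum_y g x y = mu x * (\sum_y p x y * psi x - \sum_y p x y * psi y).
    by rewrite -sumrB mulr_sumr; apply: eq_bigr => y _; rewrite /g; ring.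
  by rewrite -mulr_suml p_sum1 psi_eig //; ring.
have inner : \sum_(x in B) \sum_(y in B) g x y = 0.
  have g_anti x y : g y x = - g x y by rewrite /g -p_rev; ring.
  set S := LHS; have : S = - S.
    rewrite {1}/S exchange_big /= -sumrN; apply: eq_bigr => x _.
    by rewrite -sumrN; apply: eq_bigr => y _; apply: g_anti.
  by move/eqP; rewrite -addr_eq0 -mulr2n mulrn_eq0 /= => /eqP.
rewrite mulr_sumr (eq_bigr _ row).
rewrite (eq_bigr (fun x => \sum_(y in B) g x y + \sum_(y | y \notin B) g x y)).
  by rewrite big_split /= inner add0r.
by move=> x _; rewrite (bigID (fun y => y \in B)).
Qed.

Lemma flow_ratio_ge : B != set0 -> (forall x, 0 <= psi x) -> lam <= flow_ratio mu p B.
Proof.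
move=> B_n0 psi_ge0; have D_gt0 : 0 < \sum_(x in B) mu x by exact: sumr_gt0_set.
rewrite /flow_ratio boundary_flowE ler_pdivlMr //.
set D := \sum_(x in B) mu x.
set S := \sum_(x in B) \sum_(y in B) mu x * p x y.
set S1 := \sum_(x in B) \sum_(y in B) mu x * p x y * (psi y / psi x).
have out_flow : \sum_(x in B) \sum_(y | y \notin B) mu x * p x y = D - S.
  rewrite /D /S -sumrB; apply: eq_bigr => x _.
  have := p_sum1 x; rewrite (bigID (fun y => y \in B)) /= => row1.
  by rewrite -!mulr_sumr -{2}[mu x]mulr1 -row1; ring.
have S1_swap : S1 = \sum_(x in B) \sum_(y in B) mu x * p x y * (psi x / psi y).
  rewrite /S1 exchange_big /=; apply: eq_bigr => x _; apply: eq_bigr => y _.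
  by rewrite p_rev.
(* AM-GM on the two expressions of [S1]. *)
have S_le : S *+ 2 <= S1 *+ 2.
  rewrite -[S1 *+ 2]mulr2n mulr2n {2}S1_swap /S -!sumrMnl -big_split /=.
  apply: ler_sum => x xB; rewrite -!sumrMnl -big_split /=; apply: ler_sum => y yB.
  rewrite -mulrDr -mulr_natr ler_wpM2l ?mulr_ge0 ?(ltW (mu_gt0 x)) //.
  by rewrite two_le_ratio_add ?psi_B_gt0.
have S1_le : S1 <= (1 - lam) * D.
  rewrite /D mulr_sumr; apply: ler_sum => x xB; have psix_gt0 := psi_B_gt0 xB.
  have -> : \sum_(y in B) mu x * p x y * (psi y / psi x) =
      mu x / psi x * \sum_(y in B) p x y * psi y.
    by rewrite mulr_sumr; apply: eq_bigr => y _; field; rewrite lt0r_neq0.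
  have S_in_le : \sum_(y in B) p x y * psi y <= (1 - lam) * psi x.
    rewrite -psi_eig // [leRHS](bigID (fun y => y \in B)) /= lerDl.
    by rewrite sumr_ge0 // => y _; rewrite mulr_ge0.
  rewrite [leRHS](_ : _ = mu x / psi x * ((1 - lam) * psi x)).
    by rewrite ler_wpM2l // divr_ge0 // ltW.
  by field; rewrite lt0r_neq0.
by rewrite out_flow; rewrite lerMn2r /= in S_le; lra.
Qed.

Lemma flow_ratio_le_gap b d M : 0 < d -> B != set0 ->
    (forall x, x \in B -> b + d <= psi x) -> (forall y, y \notin B -> psi y <= b) ->
    (forall y, psi y <= M) ->
  d * flow_ratio mu p B <= lam * M.
Proof.
move=> d_gt0 B_n0 psi_hi psi_lo psi_le.
have D_gt0 : 0 < \sum_(x in B) mu x by exact: sumr_gt0_set.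
have P_gt0 : 0 < \sum_(x in B) mu x * psi x.
  by apply: sumr_gt0_set => // x xB; rewrite mulr_gt0 ?psi_B_gt0.
set D := \sum_(x in B) mu x; set P := \sum_(x in B) mu x * psi x.
set N := \sum_(x in B) \sum_(y | y \notin B) mu x * p x y.
have dN_le : d * N <= lam * P.
  rewrite flow_identity /N mulr_sumr; apply: ler_sum => x xB.
  rewrite mulr_sumr; apply: ler_sum => y yB.
  rewrite mulrC ler_wpM2l ?mulr_ge0 ?(ltW (mu_gt0 x)) //.
  by have := psi_hi x xB; have := psi_lo y yB; lra.
have lam_ge0 : 0 <= lam.
  rewrite -(pmulr_lge0 _ P_gt0); apply: le_trans dN_le.
  rewrite mulr_ge0 ?(ltW d_gt0) // sumr_ge0 // => x _.
  by rewrite sumr_ge0 // => y _; rewrite mulr_ge0 // ltW.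
have P_le : P <= M * D.
  rewrite /P /D mulr_sumr; apply: ler_sum => x _.
  by rewrite mulrC ler_wpM2r // ltW.
rewrite /flow_ratio boundary_flowE -/N -/D mulrA ler_pdivrMr //.
by apply: le_trans dN_le _; rewrite -mulrA ler_wpM2l.
Qed.
End FlowRatio.

Theorem lemma6 (R : realType) (T : finType) (p : T -> T -> R) (mu : T -> R)
    (A : {set T}) (lam : R) (psi0 : T -> R) :
  stochastic p ->
  (forall x, 0 < mu x) ->
  reversible mu p ->
  (exists x, x \notin A) ->
  irreducible_on (killed p A) (~: A) ->
  aperiodic_on (killed p A) (~: A) ->
  largest_eigenvalue (killed p A) (1 - lam) ->
  (forall x, 0 <= psi0 x) ->
  eigenvector (killed p A) (1 - lam) psi0 ->
  exists b : R, 0 <= b /\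
    let B := [set x | b < psi0 x] in
    [/\ B != set0,
        (#|T|%:R)^-1 * flow_ratio mu p B <= lam
      & lam <= flow_ratio mu p B].
Proof.
move=> p_stoch mu_gt0 p_rev [x0 x0A] irr _ lam_top psi_ge0 [[xn psi_xn] psi_eig].
have Q_ge0 := killed_ge0 A p_stoch.1.
have lam_lt1 : 0 < 1 - lam.
  have x0D : x0 \in ~: A by rewrite inE.
  have [[|n] [//= _ /(mpow_gt0_row_gt0 Q_ge0)[z Qz_gt0]]] := irr x0 x0 x0D x0D.
  exact: largest_eigenvalue_gt0 mu_gt0 (killed_reversible A p_rev) Q_ge0
    Qz_gt0 lam_top.
have psiA := killed_eigenvector_eq0 (lt0r_neq0 lam_lt1) psi_eig.
have psi_eigE := killed_eigenvectorE (lt0r_neq0 lam_lt1) psi_eig.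
case: (@arg_maxP _ _ T xn xpredT psi0 isT) => xm _ psi_max.
have M_gt0 : 0 < psi0 xm.
  by apply: lt_le_trans (psi_max xn isT); rewrite lt_def psi_xn psi_ge0.
have [b [b_ge0 b_lt gap]] := exists_level_gap (fun y => psi_max y isT) M_gt0.
exists b; split => //=; set B := [set x | b < psi0 x].
have B_n0 : B != set0 by apply/set0Pn; exists xm; rewrite inE.
have psi_B_gt0 x : x \in B -> 0 < psi0 x by rewrite inE; exact: le_lt_trans.
have psi_B_eig x : x \in B -> \sum_y p x y * psi0 y = (1 - lam) * psi0 x.
  move=> xB; apply: psi_eigE; apply: contraTN xB => /psiA.
  by rewrite inE -leNgt => ->.
have psi_hi x : x \in B -> b + psi0 xm / #|T|%:R <= psi0 x.
  by rewrite inE => b_lt_x; move: (gap x); rewrite leNgt b_lt_x.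
have psi_lo y : y \notin B -> psi0 y <= b by rewrite inE -leNgt.
have d_gt0 : 0 < psi0 xm / #|T|%:R.
  by rewrite divr_gt0 // ltr0n; apply/card_gt0P; exists xm.
split=> //.
- have gap_bound := flow_ratio_le_gap p_stoch mu_gt0 p_rev psi_B_gt0 (lam := lam)
    psi_B_eig d_gt0 B_n0 psi_hi psi_lo (fun y => psi_max y isT).
  by rewrite -mulrA (mulrC lam) ler_pM2l in gap_bound.
- exact: (flow_ratio_ge p_stoch mu_gt0 p_rev psi_B_gt0 (lam := lam) psi_B_eig
    B_n0 psi_ge0).
Qed.
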